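(* (1) Let $\Gamma<\mathrm{GL}(n,\mathbb{Q})$ be a subgroup such that for every finite index subgroup $\Gamma_0<\Gamma$, every non-zero $\Gamma_0$-invariant vector subspace $V\subset\mathbb{Q}^n$ equals $\mathbb{Q}^n$. Then the commensurator of $\Gamma\ltimes\mathbb{Q}^n$ (acting on $\mathbb{Q}^n$ by affine transformations $w\mapsto v+gw$) inside $\mathrm{Perm}(\mathbb{Q}^n)$ equals $\mathrm{Comm}_{\mathrm{GL}(n,\mathbb{Q})}(\Gamma)\ltimes\mathbb{Q}^n$. (2) Let $\Lambda$ be a group that cannot be written as a non-trivial direct product and has no non-trivial finite index subgroups, and let $\Lambda_0<\Lambda$ be a proper subgroup with the relative ICC property. Then the commensurator, inside $\mathrm{Perm}(\Lambda)$, of $\Lambda_0\times\Lambda$ acting on $\Lambda$ by left-right multiplication consists exactly of the permutations $g\mapsto\alpha(g)g_0$ with $\alpha\in\mathrm{Comm}_{\mathrm{Aut}(\Lambda)}(\mathrm{Ad}\,\Lambda_0)$ and $g_0\in\Lambda$.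
   Context: For a subgroup $H$ of a group $G$, $\mathrm{Comm}_G(H)=\{g\in G: gHg^{-1}\cap H$ has finite index in $gHg^{-1}$ and $H\}$. $\mathrm{Perm}(S)$ is the group of all permutations of a set $S$. A subgroup $\Lambda_0<\Lambda$ has the relative ICC property if $\{ghg^{-1}:g\in\Lambda_0\}$ is infinite for every $h\in\Lambda\setminus\{e\}$. $\mathrm{Ad}\,\Lambda_0$ is the group of inner automorphisms $\mathrm{Ad}\,h$, $h\in\Lambda_0$, inside $\mathrm{Aut}(\Lambda)$. The left-right action is $(h,k)\cdot g=hgk^{-1}$. *)

From HB Require Import structures.
From mathcomp Require Import all_boot all_order all_algebra.
From Stdlib Require List.
Set Implicit Arguments. Unset Strict Implicit. Unset Printing Implicit Defensive.
Import GRing.Theory.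
Local Open Scope ring_scope.

Section Generic.
Variables (T : Type) (mul : T -> T -> T) (one : T).

Definition is_subgroup (G H : T -> Prop) : Prop :=
  (forall h, H h -> G h) /\ H one /\
  (forall a b, H a -> H b -> H (mul a b)) /\
  (forall a, H a -> exists b, H b /\ mul a b = one /\ mul b a = one).

Definition fin_index (K H : T -> Prop) : Prop :=
  exists s : list T, (forall a, List.In a s -> H a) /\
    forall h, H h -> exists a k, List.In a s /\ K k /\ h = mul a k.

(* g H g^{-1}, written without inverses: x = g h g^{-1}  <->  x g = g h *)
Definition conjS (g : T) (H : T -> Prop) : T -> Prop :=
  fun x => exists h, H h /\ mul x g = mul g h.

Definition capS (A B : T -> Prop) : T -> Prop := fun x => A x /\ B x.

Definition Comm (G H : T -> Prop) : T -> Prop :=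
  fun g => G g /\ fin_index (capS (conjS g H) H) (conjS g H)
               /\ fin_index (capS (conjS g H) H) H.
End Generic.

Definition compf (S : Type) (f g : S -> S) : S -> S := fun x => f (g x).
Definition PermS (S : Type) : (S -> S) -> Prop := fun f => bijective f.

Definition matmul (n : nat) (A B : 'M[rat]_n) : 'M[rat]_n := A *m B.
Definition GLn (n : nat) : 'M[rat]_n -> Prop := fun A => A \in unitmx.

Definition is_subspace (n : nat) (V : 'cV[rat]_n -> Prop) : Prop :=
  V 0 /\ (forall u v, V u -> V v -> V (u + v)) /\
  (forall (c : rat) v, V v -> V (c *: v)).

Definition Aff (n : nat) (Gamma : 'M[rat]_n -> Prop) : ('cV[rat]_n -> 'cV[rat]_n) -> Prop :=
  fun f => exists g v, Gamma g /\ f = (fun w => v + g *m w).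

Definition is_group (L : Type) (mul : L -> L -> L) (one : L) (inv : L -> L) : Prop :=
  (forall x y z, mul x (mul y z) = mul (mul x y) z) /\
  (forall x, mul one x = x) /\ (forall x, mul (inv x) x = one).

Definition normalS (L : Type) (mul : L -> L -> L) (inv : L -> L) (H : L -> Prop) : Prop :=
  forall g h, H h -> H (mul (mul g h) (inv g)).

Definition no_direct_product (L : Type) (mul : L -> L -> L) (one : L) (inv : L -> L) : Prop :=
  forall A B : L -> Prop,
    is_subgroup mul one (fun _ => True) A -> is_subgroup mul one (fun _ => True) B ->
    normalS mul inv A -> normalS mul inv B ->
    (forall x, A x -> B x -> x = one) ->
    (forall g, exists a b, A a /\ B b /\ g = mul a b) ->
    (forall a, A a -> a = one) \/ (forall b, B b -> b = one).

Definition no_fin_index_sub (L : Type) (mul : L -> L -> L) (one : L) : Prop :=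
  forall H : L -> Prop, is_subgroup mul one (fun _ => True) H ->
    fin_index mul H (fun _ => True) -> forall g, H g.

Definition relative_ICC (L : Type) (mul : L -> L -> L) (one : L) (inv : L -> L)
  (L0 : L -> Prop) : Prop :=
  forall h, h <> one ->
    ~ exists s : list L, forall g, L0 g -> List.In (mul (mul g h) (inv g)) s.

Definition LRaction (L : Type) (mul : L -> L -> L) (inv : L -> L) (L0 : L -> Prop)
  : (L -> L) -> Prop :=
  fun f => exists h k, L0 h /\ f = (fun g => mul (mul h g) (inv k)).

Definition AutL (L : Type) (mul : L -> L -> L) : (L -> L) -> Prop :=
  fun f => bijective f /\ forall x y, f (mul x y) = mul (f x) (f y).

Definition AdS (L : Type) (mul : L -> L -> L) (inv : L -> L) (L0 : L -> Prop)
  : (L -> L) -> Prop :=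
  fun phi => exists h, L0 h /\ phi = (fun x => mul (mul h x) (inv h)).

From mathcomp Require Import all_boot all_order all_algebra.
From Stdlib Require Import FunctionalExtensionality Classical ClassicalEpsilon.
From Stdlib Require List.
Set Implicit Arguments. Unset Strict Implicit. Unset Printing Implicit Defensive.
Import GRing.Theory Num.Theory.
Local Open Scope ring_scope.

(* Let [f] commensurate an action group [A < Perm(X)] and let [T < A] be a group without
   proper finite-index subgroups ([Q^n] acting by translations, resp. [Lambda] acting by
   right multiplications). Pulling back the finite-index subgroup [f A f^-1 ∩ A] along
   [t |-> f t f^-1] and along [t |-> t] gives [f T f^-1 ⊆ A] and [T ⊆ f^-1 A f].
   (1) So [f (u + w) = c u + G u * f w] with [u |-> (G u, c u)] a homomorphism into the
   affine group. The vectors [x - G u * x] are fixed by every [G v] and span a subspace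
   invariant under a finite-index subgroup of [Gamma]; irreducibility forces [G = 1], so
   [c] is additive, hence [Q]-linear, and [f] is affine.
   (2) So [f (g x) = P x * f g * Q x] with [P] an anti-homomorphism into [Lambda_0] and [Q] a
   homomorphism. Relative ICC kills the relevant centralizers, and the no-direct-product
   hypothesis, applied to [Q Lambda] and its centralizer and then to [ker P] and [ker Q],
   forces [P = 1]: [f g = alpha g * f 1] with [alpha] an automorphism.
   Conversely, the action groups factor uniquely as (linear part)(translation), resp.
   (left)(right multiplication), so for maps of these shapes the commensuration condition
   in [Perm(X)] is literally that of [Gamma], resp. [Ad Lambda_0]. *)

Lemma witness_list (A B : Type) (Q : B -> Prop) (R : A -> B -> Prop) (s : list A) :
  exists s' : list B, (forall c, List.In c s' -> Q c) /\
    forall a, List.In a s -> forall c, Q c -> R a c -> exists2 c', List.In c' s' & R a c'.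
Proof.
elim: s => [|a s [s' [s'Q s'R]]]; first by exists nil.
have [[c [Qc Rac]]|noc] := classic (exists c, Q c /\ R a c).
  exists (c :: s'); split=> [c' [<-|/s'Q]|a' [<-|a's] c' Qc' Rc'] //.
    by exists c; first left.
  by have [c'' ? ?] := s'R a' a's c' Qc' Rc'; exists c''; first right.
exists s'; split=> // a' [<-|a's] c Qc Rc; last exact: s'R a's c Qc Rc.
by case: noc; exists c.
Qed.

Section Monoid.
Variables (T : Type) (mul : T -> T -> T) (one : T).
Local Notation subgroup := (is_subgroup mul one (fun _ => True)).

Lemma subgroup1 H : subgroup H -> H one.
Proof. by case=> _ []. Qed.

Lemma subgroupM H a b : subgroup H -> H a -> H b -> H (mul a b).
Proof. by case=> _ [_ [HM _]]; apply: HM. Qed.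

Lemma subgroup_inverse H a : subgroup H -> H a ->
  exists b, H b /\ mul a b = one /\ mul b a = one.
Proof. by case=> _ [_ [_]]; apply. Qed.

Lemma subgroup_of G H : is_subgroup mul one G H -> subgroup H.
Proof. by case. Qed.

Lemma fin_index_mono K K' H H' : (forall x, K x -> K' x) -> (forall x, H x <-> H' x) ->
  fin_index mul K H -> fin_index mul K' H'.
Proof.
move=> KK' HH' [s [sH cover]]; exists s; split=> [a /sH /HH' //|h /HH' /cover].
by case=> a [k [sa [Kk ->]]]; exists a, k; split=> //; split=> //; apply: KK'.
Qed.

Lemma eq_fin_index K K' H H' : (forall x, K x <-> K' x) -> (forall x, H x <-> H' x) ->
  fin_index mul K H <-> fin_index mul K' H'.
Proof.
by move=> KK' HH'; split; apply: fin_index_mono => x; rewrite ?KK' ?HH'.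
Qed.

Hypotheses (mulA : associative mul) (mul1 : left_id one mul) (mulr1 : right_id one mul).

Lemma inverse_unique a b b' : mul b a = one -> mul a b' = one -> b = b'.
Proof. by move=> ba ab'; rewrite -[b]mulr1 -ab' mulA ba mul1. Qed.

Lemma subgroupV H a b : subgroup H -> H a -> mul b a = one -> H b.
Proof.
move=> GH Ha ba; have [b' [Hb' [ab' _]]] := subgroup_inverse GH Ha.
by rewrite (inverse_unique ba ab').
Qed.

Lemma subgroupI A B : subgroup A -> subgroup B -> subgroup (capS A B).
Proof.
move=> GA GB; split=> //; split; first by split; apply: subgroup1.
split=> [a b [Aa Ba] [Ab Bb]|a [Aa Ba]]; first by split; apply: subgroupM.
have [b [Ab [ab ba]]] := subgroup_inverse GA Aa.
by exists b; split=> //; split=> //; apply: subgroupV Ba ba.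
Qed.

Lemma subgroup_conj g g' H : mul g g' = one -> mul g' g = one -> subgroup H ->
  subgroup (conjS mul g H).
Proof.
move=> gg' g'g GH.
have conjE x h : mul x g = mul g h -> x = mul g (mul h g').
  by move=> xg; rewrite mulA -xg -mulA gg' mulr1.
split=> //; split; first by exists one; rewrite mul1 mulr1; split=> //; apply: subgroup1.
split=> [x y [h [Hh xg]] [k [Hk yg]]|x [h [Hh /conjE ->]]].
  by exists (mul h k); split; [apply: subgroupM | rewrite -mulA yg mulA xg -mulA].
have [k [Hk [hk kh]]] := subgroup_inverse GH Hh.
exists (mul g (mul k g')); split.
  by exists k; split=> //; rewrite -!mulA g'g mulr1.
have cancel_mid u v : mul (mul g (mul u g')) (mul g (mul v g')) = mul g (mul (mul u v) g').
  by rewrite -!mulA (mulA g' g) g'g mul1.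
by rewrite !cancel_mid hk kh mul1 gg'.
Qed.

End Monoid.

Section Morphism.
Variables (S T : Type) (smul : S -> S -> S) (sone : S) (mul : T -> T -> T) (one : T).
Hypotheses (smulA : associative smul) (smul1 : left_id sone smul).
Hypotheses (mulA : associative mul) (mul1 : left_id one mul) (mulr1 : right_id one mul).
Local Notation ssubgroup := (is_subgroup smul sone (fun _ => True)).
Local Notation subgroup := (is_subgroup mul one (fun _ => True)).
Variable phi : S -> T.
Hypothesis phiM : forall a b, phi (smul a b) = mul (phi a) (phi b).

Lemma preim_subgroup K D : phi sone = one -> subgroup K -> ssubgroup D ->
  is_subgroup smul sone D (fun d => D d /\ K (phi d)).
Proof.
move=> phi1 GK GD; split=> [d [] //|]; split.
  by rewrite phi1; split; [exact: subgroup1 GD | exact: subgroup1 GK].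
split=> [a b [Da Ka] [Db Kb]|a [Da Ka]].
  by rewrite phiM; split; [exact: subgroupM GD Da Db | exact: subgroupM GK Ka Kb].
have [b [Db [ab ba]]] := subgroup_inverse GD Da.
exists b; split=> //; split=> //; apply: subgroupV Ka _ => //.
by rewrite -phiM ba.
Qed.

Lemma preim_fin_index G K D : subgroup G -> subgroup K -> (forall x, K x -> G x) ->
  fin_index mul K G -> ssubgroup D -> (forall d, D d -> G (phi d)) ->
  fin_index smul (fun d => D d /\ K (phi d)) D.
Proof.
move=> GG GK KG [s [sG cover]] GD DG.
have [s' [s'D s'R]] := witness_list D (fun a r => exists k, K k /\ phi r = mul a k) s.
exists s'; split=> // d Dd; have [a [k [sa [Kk phid]]]] := cover _ (DG d Dd).
have [|r s'r [k' [Kk' phir]]] := s'R a sa d Dd; first by exists k.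
have [r' [Dr' [rr' _]]] := subgroup_inverse GD (s'D r s'r).
exists r, (smul r' d); split=> //; split; last by rewrite smulA rr' smul1.
split; first exact: subgroupM GD Dr' Dd.
have [a' [_ [_ a'a]]] := subgroup_inverse GG (sG a sa).
have [k'' [Kk'' [_ k''k']]] := subgroup_inverse GK Kk'.
have -> : phi (smul r' d) = mul k'' k.
  have e : mul a (mul k' (phi (smul r' d))) = mul a k.
    by rewrite mulA -phir -phiM smulA rr' smul1 phid.
  rewrite -[phi _]mul1 -k''k' -mulA -[mul k' _]mul1 -a'a -mulA e.
  by rewrite (mulA a') a'a mul1.
exact: subgroupM GK Kk'' Kk.
Qed.

Lemma no_fin_index_sub_preim G K : no_fin_index_sub smul sone -> phi sone = one ->
  ssubgroup (fun _ => True) -> subgroup G -> subgroup K -> (forall x, K x -> G x) ->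
  fin_index mul K G -> (forall d, G (phi d)) -> forall x, K (phi x).
Proof.
move=> noFI phi1 GS GG GK KG KGfin phiG x.
have [] // := noFI _ (preim_subgroup phi1 GK GS) _ x.
exact: preim_fin_index GG GK KG KGfin GS (fun d _ => phiG d).
Qed.

Section MulImage.
Variable N : T -> Prop.
Hypotheses (N1 : N one) (NM : forall m m', N m -> N m' -> N (mul m m')).
Hypothesis mul_image_inj : forall c c' m m', N m -> N m' ->
  mul (phi c) m = mul (phi c') m' -> c = c'.

(* The product set [phi(X) N]; since [mul_image_inj] makes the [S]-component of its
   elements unique, index computations in such sets reduce to [S]. *)
Definition mul_image (X : S -> Prop) : T -> Prop :=
  fun t => exists c m, X c /\ N m /\ t = mul (phi c) m.

Lemma mul_imageI X Y t :
  capS (mul_image X) (mul_image Y) t <-> mul_image (capS X Y) t.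
Proof.
split=> [[[c [m [Xc [Nm ->]]]] [c' [m' [Yc' [Nm' /mul_image_inj E]]]]]|].
  by exists c, m; rewrite -(E Nm Nm') in Yc'.
by case=> c [m [[Xc Yc] [Nm ->]]]; split; exists c, m.
Qed.

Lemma fin_index_mul_image X Y :
  (forall c m, Y c -> N m -> exists m', N m' /\ mul m (phi c) = mul (phi c) m') ->
  fin_index mul (mul_image Y) (mul_image X) <-> fin_index smul Y X.
Proof.
move=> Nswap; split=> [[s [sX cover]]|[s [sX cover]]].
  have [s' [s'X s'R]] := witness_list X (fun a c => exists m, N m /\ a = mul (phi c) m) s.
  exists s'; split=> // x Xx.
  have [|a [k [sa [[y [n [Yy [Nn ->]]]] phix]]]] := cover (phi x).
    by exists x, one; rewrite mulr1.
  have [c [n' [Xc [Nn' ac]]]] := sX a sa.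
  have [|c' s'c' [n'' [Nn'' ac']]] := s'R a sa c Xc; first by exists n'.
  have [n3 [Nn3 swap]] := Nswap y n'' Yy Nn''.
  exists c', y; split=> //; split=> //.
  apply: (mul_image_inj N1 (NM Nn3 Nn)).
  by rewrite mulr1 phix ac' phiM -!mulA (mulA n'') swap -mulA.
exists (List.map phi s); split=> [a /List.in_map_iff [c [<- sc]]|t].
  by exists c, one; rewrite mulr1; split; [apply: sX | split].
case=> x [m [Xx [Nm ->]]]; have [c [y [sc [Yy ->]]]] := cover x Xx.
exists (phi c), (mul (phi y) m); split; first by apply/List.in_map_iff; exists c.
by split; [exists y, m | rewrite phiM mulA].
Qed.

Lemma Comm_mul_image G H f X Y :
  (forall c m, capS X Y c -> N m -> exists m', N m' /\ mul m (phi c) = mul (phi c) m') ->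
  (forall t, H t <-> mul_image Y t) -> (forall t, conjS mul f H t <-> mul_image X t) ->
  Comm mul G H f <-> G f /\ fin_index smul (capS X Y) X /\ fin_index smul (capS X Y) Y.
Proof.
move=> Nswap HY fHX.
have capE t : capS (conjS mul f H) H t <-> mul_image (capS X Y) t.
  by rewrite -mul_imageI /capS fHX HY.
rewrite /Comm (eq_fin_index _ capE fHX) (eq_fin_index _ capE HY).
by rewrite !fin_index_mul_image.
Qed.

End MulImage.
End Morphism.

Section Group.
Variables (L : Type) (mul : L -> L -> L) (one : L) (inv : L -> L).
Hypothesis HG : is_group mul one inv.
Local Infix "*" := mul.

Lemma gmulA : associative mul. Proof. by case: HG. Qed.
Lemma gmul1l : left_id one mul. Proof. by case: HG => _ []. Qed.
Lemma gmulVl x : inv x * x = one. Proof. by case: HG => _ []. Qed.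

Lemma gmulVr x : x * inv x = one.
Proof.
rewrite -[x * inv x]gmul1l -[X in X * _](gmulVl (inv x)).
by rewrite -gmulA (gmulA (inv x) x) gmulVl gmul1l gmulVl.
Qed.

Lemma gmul1r : right_id one mul.
Proof. by move=> x; rewrite -(gmulVl x) gmulA gmulVr gmul1l. Qed.

Lemma gmulI x : injective (mul x).
Proof. by move=> y z e; rewrite -[y]gmul1l -(gmulVl x) -gmulA e gmulA gmulVl gmul1l. Qed.

Lemma gmulIr x : injective (mul^~ x).
Proof. by move=> y z e; rewrite -[y]gmul1r -(gmulVr x) gmulA e -gmulA gmulVr gmul1r. Qed.

Lemma ginv_uniq x y : x * y = one -> y = inv x.
Proof. by move=> e; apply: (@gmulI x); rewrite e gmulVr. Qed.

Lemma ginvK : involutive inv.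
Proof. by move=> x; symmetry; apply: ginv_uniq; apply: gmulVl. Qed.

Lemma ginvM x y : inv (x * y) = inv y * inv x.
Proof. by symmetry; apply: ginv_uniq; rewrite -gmulA (gmulA y) gmulVr gmul1l gmulVr. Qed.

Lemma ginv1 : inv one = one.
Proof. by symmetry; apply: ginv_uniq; apply: gmul1l. Qed.

Lemma gmulVK x y : x * inv y * y = x. Proof. by rewrite -gmulA gmulVl gmul1r. Qed.
Lemma gmulKV x y : x * y * inv y = x. Proof. by rewrite -gmulA gmulVr gmul1r. Qed.

Local Notation subgroup := (is_subgroup mul one (fun _ => True)).

Lemma group_subgroupT : subgroup (fun _ => True).
Proof. by split=> //; split=> //; split=> // a _; exists (inv a); rewrite gmulVr gmulVl. Qed.

Lemma subgroup_inv H a : subgroup H -> H a -> H (inv a).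
Proof. by move=> GH Ha; exact: (subgroupV gmulA gmul1l gmul1r GH Ha (gmulVl a)). Qed.

Lemma subgroupP H : H one -> (forall a b, H a -> H b -> H (a * b)) ->
  (forall a, H a -> H (inv a)) -> subgroup H.
Proof.
move=> H1 HM HV; split=> //; split=> //; split=> // a Ha.
by exists (inv a); rewrite gmulVr gmulVl; split; first exact: HV.
Qed.

End Group.

Ltac gsimpl HG := repeat progress rewrite ?(ginvM HG) ?(ginvK HG) ?(ginv1 HG) ?(gmulA HG)
  ?(gmul1l HG) ?(gmul1r HG) ?(gmulVr HG) ?(gmulVl HG) ?(gmulVK HG) ?(gmulKV HG).

Lemma compfA (X : Type) : associative (@compf X). Proof. by []. Qed.
Lemma comp1f (X : Type) : left_id id (@compf X). Proof. by []. Qed.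
Lemma compf1 (X : Type) : right_id id (@compf X). Proof. by []. Qed.

Lemma bijective_compf (X : Type) (f f' : X -> X) : cancel f f' -> cancel f' f ->
  compf f f' = id /\ compf f' f = id.
Proof. by move=> fK f'K; split; apply: functional_extensionality. Qed.


Section PermCommensurator.
Variables (X : Type) (A : (X -> X) -> Prop) (f f' : X -> X).
Hypothesis GA : is_subgroup (@compf X) id (fun _ => True) A.
Hypotheses (fK : cancel f f') (f'K : cancel f' f).
Local Notation W := (conjS (@compf X) f A).

Lemma conj_perm_subgroup : is_subgroup (@compf X) id (fun _ => True) W.
Proof. by have [ff' f'f] := bijective_compf fK f'K; apply: subgroup_conj ff' f'f GA. Qed.

Let GK := subgroupI (@compfA X) (@comp1f X) (@compf1 X) conj_perm_subgroup GA.

Hypothesis Hcomm : Comm (@compf X) (@PermS X) A f.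
Variables (S : Type) (smul : S -> S -> S) (sone : S).
Hypotheses (smulA : associative smul) (smul1 : left_id sone smul).
Variable phi : S -> X -> X.
Hypothesis phiM : forall a b, phi (smul a b) = compf (phi a) (phi b).

Lemma Comm_fin_index D : is_subgroup smul sone (fun _ => True) D ->
  (forall d, D d -> A (phi d)) -> fin_index smul (fun d => D d /\ W (phi d)) D.
Proof.
move=> GD DA; apply: (fin_index_mono _ (fun d => iff_refl (D d))
  (preim_fin_index smulA smul1 (@compfA X) (@comp1f X) phiM GA GK
    (fun t (Kt : capS W A t) => proj2 Kt) (proj2 (proj2 Hcomm)) GD DA)).
by move=> d [Dd []].
Qed.

Hypotheses (Sgroup : is_subgroup smul sone (fun _ => True) (fun _ => True)).
Hypotheses (Hnfi : no_fin_index_sub smul sone) (phi1 : phi sone = id).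

Lemma Comm_conj_preim : (forall d, W (phi d)) -> forall x, A (phi x).
Proof.
move=> Wphi x; have [] // := no_fin_index_sub_preim smulA smul1 (@compfA X) (@comp1f X)
  (@compf1 X) phiM Hnfi phi1 Sgroup conj_perm_subgroup GK
  (fun t (Kt : capS W A t) => proj1 Kt) (proj1 (proj2 Hcomm)) Wphi x.
Qed.

Lemma Comm_preim_conj : (forall d, A (phi d)) -> forall x, W (phi x).
Proof.
move=> Aphi x; have [] // := no_fin_index_sub_preim smulA smul1 (@compfA X) (@comp1f X)
  (@compf1 X) phiM Hnfi phi1 Sgroup GA GK
  (fun t (Kt : capS W A t) => proj2 Kt) (proj2 (proj2 Hcomm)) Aphi x.
Qed.
End PermCommensurator.

Section LeftRight.
Variables (L : Type) (mul : L -> L -> L) (one : L) (inv : L -> L) (L0 : L -> Prop).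
Hypotheses (HG : is_group mul one inv) (HL0 : is_subgroup mul one (fun _ => True) L0).
Hypothesis Hicc : relative_ICC mul one inv L0.
Local Infix "*" := mul.

Definition lr a b : L -> L := fun g => a * g * b.

Lemma lr_comp a b a' b' : compf (lr a b) (lr a' b') = lr (a * a') (b' * b).
Proof. by apply: functional_extensionality => g; rewrite /compf /lr; gsimpl HG. Qed.

Lemma lr11 : lr one one = id.
Proof. by apply: functional_extensionality => g; rewrite /lr; gsimpl HG. Qed.

Lemma ICC_centralizer z : (forall g, L0 g -> z * g = g * z) -> z = one.
Proof.
move=> zC; apply: NNPP => z1; apply: (Hicc z1); exists [:: z] => g L0g; left.
by rewrite -(zC g L0g) (gmulKV HG).
Qed.

Lemma lr_inj a b a' b' : lr a b = lr a' b' -> a = a' /\ b = b'.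
Proof.
move=> e; have eg g : a * g * b = a' * g * b' := congr1 (fun F => F g) e.
have b'E : b' = inv a' * a * b.
  have e1 := eg one; rewrite !(gmul1r HG) in e1.
  by rewrite -(gmulA HG) e1; gsimpl HG.
have a'a : inv a' * a = one.
  apply: ICC_centralizer => g _; apply: (gmulI HG (x := a')); apply: (gmulIr HG (x := b)).
  rewrite [LHS](_ : _ = a * g * b); last by gsimpl HG.
  by rewrite eg b'E; gsimpl HG.
have aE : a = a' by rewrite -[a](gmul1l HG) -(gmulVr HG a') -(gmulA HG) a'a (gmul1r HG).
by rewrite b'E aE (gmulVl HG) (gmul1l HG).
Qed.

Lemma LRaction_lr t : LRaction mul inv L0 t <-> exists a b, L0 a /\ t = lr a b.
Proof.
split=> [[a [b [L0a ->]]]|[a [b [L0a ->]]]]; first by exists a, (inv b).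
by exists a, (inv b); rewrite (ginvK HG).
Qed.

Lemma LRaction_subgroup : is_subgroup (@compf L) id (fun _ => True) (LRaction mul inv L0).
Proof.
split=> //; split.
  by apply/LRaction_lr; exists one, one; rewrite lr11; split=> //; apply: subgroup1 HL0.
split=> [x y /LRaction_lr [a [b [L0a ->]]] /LRaction_lr [a' [b' [L0a' ->]]]|x].
  apply/LRaction_lr; exists (a * a'), (b' * b).
  by rewrite lr_comp; split=> //; apply: subgroupM HL0 L0a L0a'.
case/LRaction_lr=> a [b [L0a ->]]; exists (lr (inv a) (inv b)); rewrite !lr_comp; gsimpl HG.
split; last by rewrite lr11.
by apply/LRaction_lr; exists (inv a), (inv b); split=> //; exact: (subgroup_inv HG HL0 L0a).
Qed.

Definition right_muls : (L -> L) -> Prop := fun m => exists b, m = lr one b.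

Lemma lr_mul_image a b : lr a b = compf (lr a one) (lr one b).
Proof. by rewrite lr_comp !(gmul1r HG). Qed.

Lemma LRaction_mul_image t :
  LRaction mul inv L0 t <-> mul_image (@compf L) (lr^~ one) right_muls L0 t.
Proof.
rewrite LRaction_lr; split=> [[a [b [L0a ->]]]|[a [_ [L0a [[b ->] ->]]]]].
  by exists a, (lr one b); rewrite -lr_mul_image; split=> //; split=> //; exists b.
by exists a, b; rewrite -lr_mul_image.
Qed.

Section Automorphism.
Variable alpha : L -> L.
Hypothesis Halpha : AutL mul alpha.

Lemma autM x y : alpha (x * y) = alpha x * alpha y. Proof. by case: Halpha. Qed.
Lemma aut1 : alpha one = one.
Proof. by apply: (gmulI HG (x := alpha one)); rewrite -autM !(gmul1r HG). Qed.
Lemma autV x : alpha (inv x) = inv (alpha x).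
Proof. by apply: (ginv_uniq HG); rewrite -autM (gmulVr HG) aut1. Qed.

Let alpha_L0 c := exists a, L0 a /\ c = alpha a.

Lemma conj_LRaction g0 t :
  conjS (@compf L) (fun g => alpha g * g0) (LRaction mul inv L0) t <->
  mul_image (@compf L) (lr^~ one) right_muls alpha_L0 t.
Proof.
case: Halpha => -[alpha' alphaK alpha'K] _; split.
  case=> _ [/LRaction_lr [a [b [L0a ->]]] e].
  exists (alpha a), (lr one (inv g0 * alpha b * g0)); rewrite -lr_mul_image.
  split; first by exists a.
  split; first by exists (inv g0 * alpha b * g0).
  have ez z : t (alpha z * g0) = alpha (a * z * b) * g0 := congr1 (fun F => F z) e.
  apply: functional_extensionality => y.
  have -> : y = alpha (alpha' (y * inv g0)) * g0 by rewrite alpha'K (gmulVK HG).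
  by rewrite ez /lr !autM; gsimpl HG.
case=> _ [_ [[a [L0a ->]] [[b ->] ->]]].
exists (lr a (alpha' (g0 * b * inv g0))); split.
  by apply/LRaction_lr; exists a, (alpha' (g0 * b * inv g0)).
by apply: functional_extensionality => z; rewrite /compf /lr !autM alpha'K; gsimpl HG.
Qed.

Definition Ad c := lr c (inv c).

Lemma AdS_mul_image (X : L -> Prop) t :
  (exists c, X c /\ t = Ad c) <-> mul_image (@compf L) Ad (fun m => m = id) X t.
Proof. by split=> [[c [Xc ->]]|[c [_ [Xc [-> ->]]]]]; [exists c, id | exists c]. Qed.

Lemma conj_AdS t : conjS (@compf L) alpha (AdS mul inv L0) t <->
  mul_image (@compf L) Ad (fun m => m = id) alpha_L0 t.
Proof.
rewrite -AdS_mul_image; case: Halpha => -[alpha' _ alpha'K] _; split.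
  case=> _ [[a [L0a ->]] e]; exists (alpha a); split; first by exists a.
  have ez z : t (alpha z) = alpha (a * z * inv a) := congr1 (fun F => F z) e.
  apply: functional_extensionality => y.
  by rewrite -[y]alpha'K ez /Ad /lr !autM autV.
case=> _ [[a [L0a ->]] ->]; exists (Ad a); split; first by exists a.
by apply: functional_extensionality => z; rewrite /compf /Ad /lr !autM autV.
Qed.

Lemma Comm_LRaction_aut g0 :
  Comm (@compf L) (@PermS L) (LRaction mul inv L0) (fun g => alpha g * g0) <->
  Comm (@compf L) (AutL mul) (AdS mul inv L0) alpha.
Proof.
have lrM a b : lr (a * b) one = compf (lr a one) (lr b one) by rewrite lr_comp (gmul1l HG).
have AdM a b : Ad (a * b) = compf (Ad a) (Ad b) by rewrite /Ad lr_comp (ginvM HG).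
have rightM m m' : right_muls m -> right_muls m' -> right_muls (compf m m').
  by move=> [b ->] [b' ->]; exists (b' * b); rewrite lr_comp (gmul1l HG).
have right_inj c c' m m' : right_muls m -> right_muls m' ->
    compf (lr c one) m = compf (lr c' one) m' -> c = c'.
  by move=> [b ->] [b' ->]; rewrite -!lr_mul_image; case/lr_inj.
have right_swap c m : right_muls m -> exists m', right_muls m' /\
    compf m (lr c one) = compf (lr c one) m'.
  move=> [b ->]; exists (lr one b).
  by rewrite !lr_comp !(gmul1l HG) !(gmul1r HG); split=> //; exists b.
have right1 : right_muls id by exists one; rewrite lr11.
have bij : PermS (fun g => alpha g * g0).
  case: Halpha => -[alpha' alphaK alpha'K] _.
  exists (fun y => alpha' (y * inv g0)) => z.
    by rewrite (gmulKV HG) alphaK.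
  by rewrite alpha'K (gmulVK HG).
have idM (m m' : L -> L) : m = id -> m' = id -> compf m m' = id by move=> -> ->.
have Ad_inj c c' m m' : m = id -> m' = id -> compf (Ad c) m = compf (Ad c') m' -> c = c'.
  by move=> -> ->; case/lr_inj.
have Ad_swap c m : alpha_L0 c /\ L0 c -> m = id ->
    exists m', m' = id /\ compf m (Ad c) = compf (Ad c) m'.
  by move=> _ ->; exists id.
rewrite (Comm_mul_image (@compfA L) (@compf1 L) lrM right1 rightM right_inj _
  (fun c m _ => right_swap c m) LRaction_mul_image (conj_LRaction g0)).
rewrite (Comm_mul_image (@compfA L) (@compf1 L) AdM (erefl id) idM Ad_inj _ Ad_swap
  (fun t => AdS_mul_image L0 t) conj_AdS).
by split=> -[_ fin]; split.
Qed.

End Automorphism.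
End LeftRight.

Section Intertwiner.
Variables (L : Type) (mul : L -> L -> L) (one : L) (inv : L -> L) (L0 : L -> Prop).
Hypotheses (HG : is_group mul one inv) (HL0 : is_subgroup mul one (fun _ => True) L0).
Hypotheses (Hicc : relative_ICC mul one inv L0) (Hndp : no_direct_product mul one inv).
Hypothesis HL0proper : exists g, ~ L0 g.
Local Infix "*" := mul.
Local Notation subgroup := (is_subgroup mul one (fun _ => True)).

Variables f f' : L -> L.
Hypotheses (fK : cancel f f') (f'K : cancel f' f).

Definition intertwines a b c k := forall g, f (a * g * b) = c * f g * k.

Variables P Q : L -> L.
Hypothesis f_mulr : forall g x, f (g * x) = P x * f g * Q x.
Hypothesis P_L0 : forall x, L0 (P x).
Hypothesis right_intertwined : forall k, exists a b, intertwines a b one k.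
Hypothesis left_intertwined :
  fin_index mul (fun c => L0 c /\ exists a b, intertwines a b c one) L0.

Lemma lr_inj_f p q p' q' : (forall g, p * f g * q = p' * f g * q') -> p = p' /\ q = q'.
Proof.
move=> e; apply: (lr_inj HG Hicc); apply: functional_extensionality => y.
by rewrite -(f'K y); apply: e.
Qed.

Lemma PQM x y : P (x * y) = P y * P x /\ Q (x * y) = Q x * Q y.
Proof.
by apply: lr_inj_f => g; rewrite -f_mulr (gmulA HG) !f_mulr; gsimpl HG.
Qed.

Lemma PM x y : P (x * y) = P y * P x. Proof. by case: (PQM x y). Qed.
Lemma QM x y : Q (x * y) = Q x * Q y. Proof. by case: (PQM x y). Qed.

Lemma PQ1 : P one = one /\ Q one = one.
Proof. by apply: lr_inj_f => g; rewrite -f_mulr; gsimpl HG. Qed.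

Lemma PV x : P (inv x) = inv (P x).
Proof. by apply: (ginv_uniq HG); rewrite -PM (gmulVl HG); case: PQ1. Qed.
Lemma QV x : Q (inv x) = inv (Q x).
Proof. by apply: (ginv_uniq HG); rewrite -QM (gmulVr HG); case: PQ1. Qed.

Lemma PQ_faithful x : P x = one -> Q x = one -> x = one.
Proof.
move=> Px1 Qx1; apply: (can_inj fK).
by rewrite -[x](gmul1l HG) f_mulr Px1 Qx1; gsimpl HG.
Qed.

Lemma PQ_onto g : exists x, P x * f one * Q x = g.
Proof. by exists (f' g); rewrite -f_mulr (gmul1l HG) f'K. Qed.

(* Left multiplication by [a] commutes with every right multiplication, hence so do
   its conjugates [g |-> c * P b^-1 * g * Q b^-1 * k] under [f]. *)
Lemma intertwines_commute a b c k : intertwines a b c k -> forall x,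
  c * P (inv b) * P x = P x * (c * P (inv b)) /\
  Q x * (Q (inv b) * k) = Q (inv b) * k * Q x.
Proof.
move=> fabck x.
have fa g : f (a * g) = c * P (inv b) * f g * (Q (inv b) * k).
  have -> : a * g = a * (g * inv b) * b by gsimpl HG.
  by rewrite fabck f_mulr; gsimpl HG.
apply: lr_inj_f => g; transitivity (f (a * (g * x))); first by rewrite fa f_mulr; gsimpl HG.
by rewrite (gmulA HG) f_mulr fa; gsimpl HG.
Qed.

Lemma Q_decomposition k : exists b c, k = Q b * c /\ forall x, Q x * c = c * Q x.
Proof.
have [a [b /intertwines_commute Qc]] := right_intertwined k.
by exists b, (Q (inv b) * k); split=> [|x]; [rewrite QV; gsimpl HG | case: (Qc x)].
Qed.

Lemma Q_centralizer_trivial z : (forall x, Q x * z = z * Q x) -> z = one.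
Proof.
move=> Bz.
pose A y := exists x, y = Q x.
pose B z := forall x, Q x * z = z * Q x.
have GA : subgroup A.
  apply: (subgroupP HG) => [|_ _ [x ->] [y ->]|_ [x ->]]; first by exists one; case: PQ1.
    by exists (x * y); rewrite QM.
  by exists (inv x); rewrite QV.
have GB : subgroup B.
  apply: (subgroupP HG) => [x|u v Bu Bv x|u Bu x]; first by gsimpl HG.
    by rewrite (gmulA HG) Bu -(gmulA HG) Bv (gmulA HG).
  by apply: (gmulI HG (x := u)); rewrite (gmulA HG) -Bu; gsimpl HG.
have nA : normalS mul inv A.
  move=> g _ [x ->]; have [b [c [-> Bc]]] := Q_decomposition g.
  by exists (b * x * inv b); rewrite !QM QV (ginvM HG) -[Q b * c * Q x](gmulA HG) -Bc; gsimpl HG.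
have nB : normalS mul inv B.
  move=> g h Bh; have [b [c [-> Bc]]] := Q_decomposition g.
  have Bchc : B (c * h * inv c).
    exact: (subgroupM GB (subgroupM GB Bc Bh) (subgroup_inv HG GB Bc)).
  have -> : Q b * c * h * inv (Q b * c) = Q b * (c * h * inv c) * inv (Q b) by gsimpl HG.
  by rewrite (Bchc b) (gmulKV HG).
case: (Hndp GA GB nA nB) => [_ [y ->] Bq|g|A1|B1].
- apply: (ICC_centralizer HG Hicc) => g _; have [b [c [-> Bc]]] := Q_decomposition g.
  by rewrite (gmulA HG) -Bq -(gmulA HG) Bc (gmulA HG).
- have [b [c [-> Bc]]] := Q_decomposition g.
  by exists (Q b), c; split; first exists b.
- have [g0 L0g0] := HL0proper; have [x] := PQ_onto (g0 * f one).
  rewrite (A1 (Q x)); last by exists x.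
  rewrite (gmul1r HG) => /(gmulIr HG) Pxg0.
  by case: L0g0; rewrite -Pxg0; apply: P_L0.
- exact: B1 _ Bz.
Qed.

(* [p := P b] centralizes [P L], and every element of the finite-index part of [L0]
   described by [left_intertwined] commutes with it; so [p] has finitely many
   [L0]-conjugates, and relative ICC forces [p = 1]. *)
Lemma Q_onto_kerP k : exists b, Q b = k /\ P b = one.
Proof.
have [a [b /intertwines_commute bc]] := right_intertwined k.
exists b; split.
  have := Q_centralizer_trivial (fun x => proj2 (bc x)).
  by rewrite QV => /(ginv_uniq HG) ->; rewrite (ginvK HG).
set p := P b.
have pC x : p * P x = P x * p.
  have [+ _] := bc x; rewrite (gmul1l HG) PV -/p => e.
  have : p * (inv p * P x) * p = p * (P x * inv p) * p by rewrite e.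
  by gsimpl HG => ->.
apply: NNPP => p1; apply: (Hicc p1).
have [s [_ cover]] := left_intertwined.
exists (List.map (fun a => a * p * inv a) s) => g L0g.
have [a0 [c [sa0 [[_ [a' [b' /intertwines_commute cC]]] ->]]]] := cover g L0g.
have cp : c * p = p * c.
  have [+ _] := cC b; rewrite PV -/p => e.
  have -> : c * p = c * inv (P b') * (P b' * p) by gsimpl HG.
  by rewrite -pC (gmulA HG) e; gsimpl HG.
apply/List.in_map_iff; exists a0; split=> //.
have -> : a0 * c * p * inv (a0 * c) = a0 * (c * p) * inv c * inv a0 by gsimpl HG.
by rewrite cp; gsimpl HG.
Qed.

Lemma P_trivial x : P x = one.
Proof.
pose N y := P y = one.
pose M y := Q y = one.
have [P1 Q1] := PQ1.
have GN : subgroup N.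
  apply: (subgroupP HG) => [//|u v Nu Nv|u Nu]; rewrite /N ?PM ?PV ?Nu ?Nv ?(ginv1 HG) //.
  exact: gmul1l HG _.
have GM : subgroup M.
  apply: (subgroupP HG) => [//|u v Mu Mv|u Mu]; rewrite /M ?QM ?QV ?Mu ?Mv ?(ginv1 HG) //.
  exact: gmul1l HG _.
have nN : normalS mul inv N by move=> g h Nh; rewrite /N !PM Nh PV (gmul1l HG) (gmulVl HG).
have nM : normalS mul inv M by move=> g h Mh; rewrite /M !QM Mh QV (gmul1r HG) (gmulVr HG).
case: (Hndp GN GM nN nM) => [y Ny My|g|N1|M1].
- exact: PQ_faithful.
- have [b [Qb Pb]] := Q_onto_kerP (Q g).
  exists b, (inv b * g); split=> //; split; last by gsimpl HG.
  by rewrite /M QM QV Qb (gmulVl HG).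
- have [g0 L0g0] := HL0proper; have [b [Qb Pb]] := Q_onto_kerP g0.
  by case: L0g0; rewrite -Qb (N1 b Pb) Q1; apply: subgroup1 HL0.
- have [b [Qb Pb]] := Q_onto_kerP (Q x).
  have xb : x * inv b = one by apply: M1; rewrite /M QM QV Qb (gmulVr HG).
  by rewrite -(gmulVK HG x b) xb (gmul1l HG).
Qed.

Lemma intertwiner_aut : exists alpha, AutL mul alpha /\ f = (fun g => alpha g * f one).
Proof.
have f_mulr1 g x : f (g * x) = f g * Q x by rewrite f_mulr P_trivial (gmul1l HG).
exists (fun g => f g * inv (f one)); split; last first.
  by apply: functional_extensionality => g; rewrite (gmulVK HG).
split=> [|x y].
  exists (fun y => f' (y * f one)) => z; first by rewrite (gmulVK HG) fK.
  by rewrite f'K (gmulKV HG).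
have -> : f y = f one * Q y by rewrite -f_mulr1 (gmul1l HG).
by rewrite f_mulr1; gsimpl HG.
Qed.
End Intertwiner.

Section LRCommensurator.
Variables (L : Type) (mul : L -> L -> L) (one : L) (inv : L -> L) (L0 : L -> Prop).
Hypotheses (HG : is_group mul one inv) (HL0 : is_subgroup mul one (fun _ => True) L0).
Hypothesis Hnfi : no_fin_index_sub mul one.
Local Infix "*" := mul.
Local Notation LR := (LRaction mul inv L0).

Variables f f' : L -> L.
Hypotheses (fK : cancel f f') (f'K : cancel f' f).
Hypothesis Hcomm : Comm (@compf L) (@PermS L) LR f.

Let GLR := LRaction_subgroup HG HL0.

Let LR_right_mul x : LR (lr mul one x).
Proof. by apply/(LRaction_lr L0 HG); exists one, x; split=> //; apply: subgroup1 HL0. Qed.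

Lemma right_mul_conj x : exists p q, L0 p /\ forall g, f (g * x) = p * f g * q.
Proof.
pose phi x : L -> L := compf f (compf (lr mul one (inv x)) f').
have phiM a b : phi (a * b) = compf (phi a) (phi b).
  by apply: functional_extensionality => g; rewrite /phi /compf /lr fK; gsimpl HG.
have phi1 : phi one = id.
  by apply: functional_extensionality => g; rewrite /phi /compf /lr; gsimpl HG; rewrite f'K.
have Wphi d : conjS (@compf L) f LR (phi d).
  exists (lr mul one (inv d)); split; first exact: LR_right_mul.
  by apply: functional_extensionality => g; rewrite /phi /compf fK.
have /(LRaction_lr L0 HG) [p [q [L0p phiE]]] := Comm_conj_preim GLR fK f'K Hcomm
  (gmulA HG) (gmul1l HG) phiM (group_subgroupT HG) Hnfi phi1 Wphi (inv x).
exists p, q; split=> // g; have := congr1 (fun F => F (f g)) phiE.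
by rewrite /phi /compf /lr fK (ginvK HG); gsimpl HG.
Qed.

Lemma LR_right_intertwined k : exists a b, intertwines mul f a b one k.
Proof.
pose phi x := lr mul one (inv x).
have phiM a b : phi (a * b) = compf (phi a) (phi b).
  by rewrite /phi (lr_comp HG) (ginvM HG) (gmul1l HG).
have phi1 : phi one = id by rewrite /phi (ginv1 HG) (lr11 HG).
have [_ [/(LRaction_lr L0 HG) [a [b [_ ->]]] e]] := Comm_preim_conj GLR fK f'K Hcomm
  (gmulA HG) (gmul1l HG) phiM (group_subgroupT HG) Hnfi phi1 (fun d => LR_right_mul _) (inv k).
exists a, b => g; have := congr1 (fun F => F g) e.
by rewrite /phi /compf /lr (ginvK HG) => <-.
Qed.

Lemma LR_left_intertwined :
  fin_index mul (fun c => L0 c /\ exists a b, intertwines mul f a b c one) L0.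
Proof.
have lrM a b : lr mul (a * b) one = compf (lr mul a one) (lr mul b one).
  by rewrite (lr_comp HG) (gmul1l HG).
have LRlr d : L0 d -> LR (lr mul d one) by move=> L0d; apply/(LRaction_lr L0 HG); exists d, one.
apply: (fin_index_mono _ (fun c => iff_refl (L0 c))
  (Comm_fin_index GLR fK f'K Hcomm (gmulA HG) (gmul1l HG) lrM HL0 LRlr)).
move=> c [L0c [_ [/(LRaction_lr L0 HG) [a [b [_ ->]]] e]]]; split=> //.
by exists a, b => g; have := congr1 (fun F => F g) e; rewrite /compf /lr => <-; gsimpl HG.
Qed.
End LRCommensurator.

Theorem Comm_LRaction (L : Type) (mul : L -> L -> L) (one : L) (inv : L -> L)
    (L0 : L -> Prop) :
  is_group mul one inv -> no_direct_product mul one inv -> no_fin_index_sub mul one ->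
  is_subgroup mul one (fun _ => True) L0 -> (exists g, ~ L0 g) ->
  relative_ICC mul one inv L0 -> forall f : L -> L,
  Comm (@compf _) (@PermS _) (LRaction mul inv L0) f <->
  exists (alpha : L -> L) (g0 : L),
    Comm (@compf _) (AutL mul) (AdS mul inv L0) alpha /\ f = (fun g => mul (alpha g) g0).
Proof.
move=> HG Hndp Hnfi HL0 HL0proper Hicc f; split; last first.
  by case=> alpha [g0 [Hc ->]]; apply/(Comm_LRaction_aut HG Hicc (proj1 Hc) g0).
move=> Hcomm; have [f' fK f'K] := proj1 Hcomm.
have /choice [PQ PQE] : forall x, exists pq : L * L,
    L0 pq.1 /\ forall g, f (mul g x) = mul (mul pq.1 (f g)) pq.2.
  by move=> x; have [p [q [L0p e]]] := right_mul_conj HG HL0 Hnfi fK f'K Hcomm x; exists (p, q).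
have [alpha [Halpha fE]] := intertwiner_aut HG HL0 Hicc Hndp HL0proper fK f'K
  (fun g x => proj2 (PQE x) g) (fun x => proj1 (PQE x))
  (LR_right_intertwined HG HL0 Hnfi fK f'K Hcomm)
  (LR_left_intertwined HG HL0 fK f'K Hcomm).
exists alpha, (f one); split=> //.
by apply/(Comm_LRaction_aut HG Hicc Halpha (f one)); rewrite -fE.
Qed.

Lemma In_mem (T : eqType) (a : T) (s : seq T) : List.In a s -> a \in s.
Proof. by elim: s => //= b s IHs [->|/IHs]; rewrite in_cons ?eqxx // => ->; rewrite orbT. Qed.

Lemma zmod_is_group (V : zmodType) : is_group (+%R : V -> V -> V) 0 -%R.
Proof. by split; [apply: addrA | split; [apply: add0r | apply: addNr]]. Qed.

(* Pigeonhole: two of [v *+ 0], ..., [v *+ m] lie in the same coset of [H]. *)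
Lemma fin_index_multiple (V : zmodType) (H : V -> Prop) :
  is_subgroup +%R 0 (fun _ => True) H -> fin_index +%R H (fun _ => True) ->
  exists m, forall v, exists2 d, (0 < d <= m)%N & H (v *+ d).
Proof.
move=> GH [s [_ cover]]; exists (size s) => v.
have /choice [r rP] : forall j : nat, exists a, a \in s /\ H (v *+ j - a).
  move=> j; have [a [k [sa [Hk ->]]]] := cover (v *+ j) I.
  by exists a; rewrite addrC addKr; split=> //; apply: In_mem.
pose t := [seq r j | j <- iota 0 (size s).+1].
have tE i : (i < (size s).+1)%N -> nth 0 t i = r i.
  by move=> ilt; rewrite (nth_map 0%N) ?size_iota ?nth_iota.
have t_sub : {subset t <= s} by move=> _ /mapP [j _ ->]; case: (rP j).
have : ~~ uniq t.
  by apply/negP => /uniq_leq_size /(_ t_sub); rewrite size_map size_iota ltnn.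
case/(uniqPn 0) => i [j [ij]]; rewrite size_map size_iota => jlt.
rewrite !tE ?(ltn_trans ij) // => rij.
exists (j - i)%N; first by rewrite subn_gt0 ij -ltnS (leq_ltn_trans (leq_subr _ _) jlt).
have := subgroupM GH (proj2 (rP j)) (subgroup_inv (zmod_is_group V) GH (proj2 (rP i))).
by rewrite rij opprB addrA subrK mulrnBr // ltnW.
Qed.

Lemma rat_lmod_no_fin_index_sub (V : lmodType rat) : no_fin_index_sub (+%R : V -> V -> V) 0.
Proof.
move=> H GH fin v; have [m mP] := fin_index_multiple GH fin.
have Hnat k u : H u -> H (u *+ k).
  move=> Hu; elim: k => [|k IHk]; first exact: subgroup1 GH.
  by rewrite mulrSr; apply: subgroupM GH IHk Hu.
have [d /andP [d0 dm] Hd] := mP ((m`!%:R : rat)^-1 *: v).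
have -> : v = ((m`!%:R : rat)^-1 *: v) *+ d *+ (m`! %/ d).
  rewrite -mulrnA -scaler_nat mulnC divnK ?dvdn_fact ?d0 //.
  by rewrite scalerA mulfV ?scale1r // pnatr_eq0 -lt0n fact_gt0.
exact: Hnat.
Qed.

Lemma colmx_ext (R : pzRingType) m n (A B : 'M[R]_(m, n)) :
  (forall w : 'cV_n, A *m w = B *m w) -> A = B.
Proof.
move=> e; apply/matrixP => i j.
by have := e (delta_mx j 0); rewrite -!(colE j) => /colP/(_ i); rewrite !mxE.
Qed.

Lemma injective_unitmx (F : fieldType) n (M : 'M[F]_n) :
  (forall w : 'cV_n, M *m w = 0 -> w = 0) -> M \in unitmx.
Proof.
move=> Minj; rewrite -unitmx_tr -row_free_unit; apply: inj_row_free => v.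
by move/(congr1 trmx); rewrite trmx_mul trmxK trmx0 => /Minj /(congr1 trmx); rewrite trmxK trmx0.
Qed.

Lemma additive_mulmx m n (c : 'cV[rat]_m -> 'cV[rat]_n) :
  (forall u v, c (u + v) = c u + c v) ->
  forall w, c w = (\matrix_(i, j) c (delta_mx j 0) i 0) *m w.
Proof.
move=> cD; have c0 : c 0 = 0 by apply: (@addrI _ (c 0)); rewrite -cD !addr0.
have cZ : scalable c.
  by apply: rat_linear => u v; apply/eqP; rewrite eq_sym subr_eq -cD subrK.
move=> w; rewrite [in LHS](matrix_sum_delta w) [in RHS](matrix_sum_delta w).
rewrite (big_morph c cD c0) mulmx_sumr; apply: eq_bigr => i _.
rewrite (big_morph c cD c0) mulmx_sumr; apply: eq_bigr => j _.
rewrite cZ -scalemxAr (ord1 j) -colE; congr (_ *: _).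
by apply/matrixP => a b; rewrite !mxE (ord1 b).
Qed.

Lemma matmulA n : associative (@matmul n). Proof. exact: mulmxA. Qed.
Lemma matmul1 n : left_id 1%:M (@matmul n). Proof. exact: mul1mx. Qed.

Section Affine.
Variable n : nat.
Local Notation V := 'cV[rat]_n.

Definition aff (A : 'M[rat]_n) (u : V) : V -> V := fun w => u + A *m w.

Lemma aff_comp A u B u' : compf (aff A u) (aff B u') = aff (A *m B) (u + A *m u').
Proof. by apply: functional_extensionality => w; rewrite /compf /aff mulmxDr mulmxA addrA. Qed.

Lemma aff_inj A u B u' : aff A u = aff B u' -> A = B /\ u = u'.
Proof.
move=> e; have ew w : u + A *m w = u' + B *m w := congr1 (fun F => F w) e.
have uu' : u = u' by have := ew 0; rewrite !mulmx0 !addr0.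
by split=> //; apply: colmx_ext => w; apply: (@addrI _ u); rewrite ew uu'.
Qed.

Lemma aff_id : aff 1%:M 0 = id.
Proof. by apply: functional_extensionality => w; rewrite /aff mul1mx add0r. Qed.

Definition translations : (V -> V) -> Prop := fun m => exists u, m = aff 1%:M u.

Lemma aff_mul_image (X : 'M[rat]_n -> Prop) : (forall A, X A -> A \in unitmx) ->
  forall t, (exists A u, X A /\ t = aff A u) <-> mul_image (@compf V) (aff^~ 0) translations X t.
Proof.
move=> Xunit t; split=> [[A [u [XA ->]]]|[A [_ [XA [[u ->] ->]]]]].
  exists A, (aff 1%:M (invmx A *m u)); split=> //; split; first by exists (invmx A *m u).
  by rewrite aff_comp mulmx1 add0r mulKVmx ?Xunit.
by exists A, (A *m u); rewrite aff_comp mulmx1 add0r.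
Qed.

Variable Gamma : 'M[rat]_n -> Prop.
Hypothesis HGa : is_subgroup (@matmul n) 1%:M (@GLn n) Gamma.

Lemma Gamma_unit g : Gamma g -> g \in unitmx.
Proof. by case: HGa => sub _ /sub. Qed.

Lemma Aff_aff t : Aff Gamma t <-> exists g u, Gamma g /\ t = aff g u.
Proof. by []. Qed.

Lemma Aff_subgroup : is_subgroup (@compf V) id (fun _ => True) (Aff Gamma).
Proof.
have GGa := subgroup_of HGa.
split=> //; split.
  by apply/Aff_aff; exists 1%:M, 0; rewrite aff_id; split=> //; apply: subgroup1 GGa.
split=> [x y /Aff_aff [g [u [Gg ->]]] /Aff_aff [g' [u' [Gg' ->]]]|x /Aff_aff [g [u [Gg ->]]]].
  apply/Aff_aff; exists (g *m g'), (u + g *m u').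
  by rewrite aff_comp; split=> //; exact: (subgroupM GGa Gg Gg').
have [g' [Gg' [gg' g'g]]] := subgroup_inverse GGa Gg.
exists (aff g' (- (g' *m u))); split; first by exists g', (- (g' *m u)).
rewrite /matmul in gg' g'g; rewrite !aff_comp gg' g'g mulmxN mulmxA gg' mul1mx.
by rewrite subrr addNr aff_id.
Qed.

Lemma conj_Aff M v t : M \in unitmx ->
  conjS (@compf V) (aff M v) (Aff Gamma) t <->
  exists A u, conjS (@matmul n) M Gamma A /\ t = aff A u.
Proof.
move=> Munit; split.
  case=> _ [/Aff_aff [g [c [Gg ->]]] e].
  exists (M *m g *m invmx M), (v + M *m c - M *m g *m invmx M *m v); split.
    by exists g; split=> //; rewrite /matmul mulmxKV.
  apply: functional_extensionality => y.
  have ey w : t (v + M *m w) = v + M *m (c + g *m w) := congr1 (fun F => F w) e.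
  have yE : y = v + M *m (invmx M *m (y - v)) by rewrite mulKVmx // addrC subrK.
  rewrite {1}yE ey /aff mulmxDr !mulmxA mulmxBr.
  by rewrite !addrA [RHS]addrAC.
case=> A [u [[g [Gg eA]] ->]].
exists (aff g (invmx M *m (u + A *m v - v))).
split; first by exists g, (invmx M *m (u + A *m v - v)).
rewrite /matmul in eA; apply: functional_extensionality => w.
rewrite /compf /aff !mulmxDr !mulmxA eA mulmxV // !mul1mx.
by rewrite !addrA [v + u]addrC (addrAC (u + v)) addrK.
Qed.

Lemma Comm_Aff_aff M v : M \in unitmx ->
  Comm (@compf V) (@PermS V) (Aff Gamma) (aff M v) <-> Comm (@matmul n) (@GLn n) Gamma M.
Proof.
move=> Munit.
have linM A B : aff (matmul A B) 0 = compf (aff A 0) (aff B 0).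
  by rewrite aff_comp mulmx0 addr0.
have transl1 : translations id by exists 0; rewrite aff_id.
have translM m m' : translations m -> translations m' -> translations (compf m m').
  by move=> [u ->] [u' ->]; exists (u + u'); rewrite aff_comp !mul1mx.
have transl_inj A A' m m' : translations m -> translations m' ->
    compf (aff A 0) m = compf (aff A' 0) m' -> A = A'.
  by move=> [u ->] [u' ->]; rewrite !aff_comp !mulmx1 => /aff_inj [].
have transl_swap A m : capS (conjS (@matmul n) M Gamma) Gamma A -> translations m ->
    exists m', translations m' /\ compf m (aff A 0) = compf (aff A 0) m'.
  move=> [_ /Gamma_unit Aunit] [u ->]; exists (aff 1%:M (invmx A *m u)).
  by split; [exists (invmx A *m u) | rewrite !aff_comp mulmx1 mul1mx mulmx0 addr0 add0r mulKVmx].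
have conj_unit A : conjS (@matmul n) M Gamma A -> A \in unitmx.
  case=> g [/Gamma_unit gunit eA]; rewrite /matmul in eA.
  by rewrite -(mulmxK Munit A) eA !unitmx_mul unitmx_inv Munit gunit.
have bij : PermS (aff M v).
  exists (aff (invmx M) (- (invmx M *m v))) => w; rewrite /aff mulmxDr.
    by rewrite mulKmx // addrA addNr add0r.
  by rewrite mulKVmx // mulmxN mulKVmx // addrA subrr add0r.
rewrite (Comm_mul_image (@compfA V) (@compf1 V) linM transl1 translM transl_inj _ transl_swap
  (fun t => iff_trans (iff_refl (Aff Gamma t)) (aff_mul_image Gamma_unit t))
  (fun t => iff_trans (conj_Aff v t Munit) (aff_mul_image conj_unit t))).
by split=> -[_ fin]; split.
Qed.
End Affine.

Section AffineIntertwiner.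
Variable n : nat.
Local Notation V := 'cV[rat]_n.
Variables f f' : V -> V.
Hypotheses (fK : cancel f f') (f'K : cancel f' f).
Variables (Gm : V -> 'M[rat]_n) (cm : V -> V).
Hypothesis f_addl : forall u w, f (u + w) = cm u + Gm u *m f w.
Hypothesis transl_intertwined : forall x, exists g c, forall w, f (c + g *m w) = x + f w.
Variable Gamma0 : 'M[rat]_n -> Prop.
Hypothesis lin_intertwined : forall d, Gamma0 d ->
  exists g c, g \in unitmx /\ forall w, f (c + g *m w) = d *m f w.
Hypothesis Gamma0_irreducible : forall S : V -> Prop, is_subspace S ->
  (forall g v, Gamma0 g -> S v -> S (g *m v)) -> (exists v, S v /\ v <> 0) -> forall v, S v.

Lemma aff_inj_f (A B : 'M[rat]_n) (u u' : V) :
  (forall w, u + A *m f w = u' + B *m f w) -> A = B /\ u = u'.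
Proof.
move=> e; apply: (@aff_inj n); apply: functional_extensionality => y.
by rewrite -(f'K y); apply: e.
Qed.

Lemma Gm_cm_add u u' : Gm (u + u') = Gm u *m Gm u' /\ cm (u + u') = cm u + Gm u *m cm u'.
Proof. by apply: aff_inj_f => w; rewrite -f_addl -addrA !f_addl mulmxDr mulmxA addrA. Qed.

Lemma Gm_cm0 : Gm 0 = 1%:M /\ cm 0 = 0.
Proof. by apply: aff_inj_f => w; rewrite -f_addl !add0r mul1mx. Qed.

Lemma intertwines_Gm_cm d dd g e : (forall w, f (e + g *m w) = dd + d *m f w) -> forall u,
  d *m Gm u = Gm (g *m u) *m d /\ dd + d *m cm u = cm (g *m u) + Gm (g *m u) *m dd.
Proof.
move=> fe u; apply: aff_inj_f => w; transitivity (f (e + g *m (u + w))).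
  by rewrite fe f_addl mulmxDr mulmxA addrA.
by rewrite mulmxDr addrCA f_addl fe mulmxDr mulmxA addrA.
Qed.

(* If [f (z + _)] is a pure translation it commutes with every [f (v + _)], so its
   translation vector is fixed by [Gm v]. *)
Lemma Gm_fix_cm z v : Gm z = 1%:M -> Gm v *m cm z = cm z.
Proof.
move=> Gz; have [_] := Gm_cm_add v z; rewrite addrC.
by have [_ ->] := Gm_cm_add z v; rewrite Gz mul1mx addrC => /addrI <-.
Qed.

Lemma Gm_translation u x : exists z, Gm z = 1%:M /\ cm z = x - Gm u *m x.
Proof.
have [g [c fe]] := transl_intertwined x.
have [Gu cmgu] : Gm u = Gm (g *m u) /\ x + cm u = cm (g *m u) + Gm (g *m u) *m x.
  have fe1 w : f (c + g *m w) = x + 1%:M *m f w by rewrite mul1mx.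
  by have := intertwines_Gm_cm fe1 u; rewrite !mul1mx mulmx1.
have [G0 cm0] := Gm_cm0; have [Gu' cmu'] := Gm_cm_add u (- u); rewrite subrr in Gu' cmu'.
exists (g *m u - u); have [-> ->] := Gm_cm_add (g *m u) (- u).
rewrite -Gu -Gu' G0; split=> //.
have cmgu' : cm (g *m u) = x + cm u - Gm u *m x by rewrite cmgu -Gu addrK.
have cmN : Gm u *m cm (- u) = - cm u by apply: (@addrI _ (cm u)); rewrite -cmu' cm0 subrr.
by rewrite cmgu' cmN addrAC addrK.
Qed.

(* The common fixed space [S] of all [Gm v] is [Gamma0]-invariant and contains every
   [x - Gm u *m x]; by irreducibility it is either zero or everything. *)
Lemma Gm_trivial u : Gm u = 1%:M.
Proof.
pose S (y : V) := forall v, Gm v *m y = y.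
have SS : is_subspace S.
  split=> [v|]; first by rewrite mulmx0.
  by split=> [a b Sa Sb v|c a Sa v]; rewrite ?mulmxDr ?Sa ?Sb // -scalemxAr Sa.
have Sinv d y : Gamma0 d -> S y -> S (d *m y).
  move=> /lin_intertwined [g [c [gunit fe]]] Sy v.
  have fe0 w : f (c + g *m w) = 0 + d *m f w by rewrite add0r.
  have [+ _] := intertwines_Gm_cm fe0 (invmx g *m v); rewrite mulKVmx // => dG.
  by rewrite mulmxA -dG -mulmxA Sy.
have Sfix x : S (x - Gm u *m x).
  by have [z [Gz <-]] := Gm_translation u x; move=> v; apply: Gm_fix_cm.
apply: colmx_ext => x; rewrite mul1mx; apply/eqP; rewrite eq_sym -subr_eq0; apply/eqP.
have [[y [Sy y0]]|S0] := classic (exists y, S y /\ y <> 0).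
  by rewrite (Gamma0_irreducible SS Sinv (ex_intro _ y (conj Sy y0)) x u) subrr.
by apply: NNPP => nz; apply: S0; exists (x - Gm u *m x).
Qed.

Lemma f_translate u w : f (u + w) = cm u + f w.
Proof. by rewrite f_addl Gm_trivial mul1mx. Qed.

Lemma f_affine : exists2 M, M \in unitmx & f = aff M (f 0).
Proof.
have cmD u v : cm (u + v) = cm u + cm v.
  by have [_ ->] := Gm_cm_add u v; rewrite Gm_trivial mul1mx.
set M := \matrix_(i, j) cm (delta_mx j 0) i 0.
have cmM := additive_mulmx cmD.
have fE : f = aff M (f 0).
  by apply: functional_extensionality => w; rewrite /aff -cmM addrC -f_translate addr0.
exists M => //; apply: injective_unitmx => w Mw0.
by apply: (can_inj fK); rewrite fE /aff Mw0 mulmx0.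
Qed.
End AffineIntertwiner.

Section AffCommensurator.
Variable n : nat.
Local Notation V := 'cV[rat]_n.
Variable Gamma : 'M[rat]_n -> Prop.
Hypothesis HGa : is_subgroup (@matmul n) 1%:M (@GLn n) Gamma.
Variables f f' : V -> V.
Hypotheses (fK : cancel f f') (f'K : cancel f' f).
Hypothesis Hcomm : Comm (@compf V) (@PermS V) (Aff Gamma) f.

Let GA := Aff_subgroup HGa.
Let HV := zmod_is_group V.

Let translD (u v : V) : aff 1%:M (u + v) = compf (aff 1%:M u) (aff 1%:M v).
Proof. by rewrite aff_comp !mul1mx. Qed.

Let Aff_transl (u : V) : Aff Gamma (aff 1%:M u).
Proof. by apply/Aff_aff; exists 1%:M, u; split=> //; apply: subgroup1 (subgroup_of HGa). Qed.

Lemma Aff_conj_transl u : exists g c, forall w, f (u + w) = c + g *m f w.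
Proof.
pose phi u := compf f (compf (aff 1%:M u) f').
have phiD a b : phi (a + b) = compf (phi a) (phi b).
  by rewrite /phi translD; apply: functional_extensionality => y; rewrite /compf fK.
have phi0 : phi 0 = id.
  by rewrite /phi aff_id; apply: functional_extensionality => y; rewrite /compf f'K.
have Wphi d : conjS (@compf V) f (Aff Gamma) (phi d).
  exists (aff 1%:M d); split; first exact: Aff_transl.
  by apply: functional_extensionality => y; rewrite /phi /compf fK.
have /Aff_aff [g [c [_ phiE]]] := Comm_conj_preim GA fK f'K Hcomm (@addrA V) (@add0r V)
  phiD (group_subgroupT HV) (@rat_lmod_no_fin_index_sub _) phi0 Wphi u.
exists g, c => w; have := congr1 (fun F => F (f w)) phiE.
by rewrite /phi /compf /aff fK mul1mx addrC.
Qed.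

Lemma Aff_transl_intertwined x : exists g c, forall w, f (c + g *m w) = x + f w.
Proof.
have [_ [/Aff_aff [g [c [_ ->]]] e]] := Comm_preim_conj GA fK f'K Hcomm (@addrA V) (@add0r V)
  translD (group_subgroupT HV) (@rat_lmod_no_fin_index_sub _) (@aff_id n) Aff_transl x.
by exists g, c => w; have := congr1 (fun F => F w) e; rewrite /compf /aff mul1mx => <-.
Qed.

Let Gamma0 d := Gamma d /\ conjS (@compf V) f (Aff Gamma) (aff d 0).

Let linM (A B : 'M[rat]_n) : aff (matmul A B) 0 = compf (aff A 0) (aff B 0).
Proof. by rewrite aff_comp mulmx0 addr0. Qed.

Lemma Aff_Gamma0_subgroup : is_subgroup (@matmul n) 1%:M Gamma Gamma0.
Proof.
exact: (preim_subgroup (@compfA V) (@comp1f V) (@compf1 V) linM (@aff_id n)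
  (conj_perm_subgroup GA fK f'K) (subgroup_of HGa)).
Qed.

Lemma Aff_Gamma0_fin_index : fin_index (@matmul n) Gamma0 Gamma.
Proof.
apply: (Comm_fin_index GA fK f'K Hcomm (@matmulA n) (@matmul1 n) linM (subgroup_of HGa)).
by move=> d Gd; apply/Aff_aff; exists d, 0.
Qed.

Lemma Aff_lin_intertwined d : Gamma0 d ->
  exists g c, g \in unitmx /\ forall w, f (c + g *m w) = d *m f w.
Proof.
case=> _ [_ [/Aff_aff [g [c [Gg ->]]] e]]; exists g, c; split; first exact: (Gamma_unit HGa Gg).
by move=> w; have := congr1 (fun F => F w) e; rewrite /compf /aff add0r => <-.
Qed.
End AffCommensurator.

Theorem Comm_Aff (n : nat) (Gamma : 'M[rat]_n -> Prop) :
  is_subgroup (@matmul n) 1%:M (@GLn n) Gamma ->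
  (forall Gamma0 : 'M[rat]_n -> Prop,
     is_subgroup (@matmul n) 1%:M Gamma Gamma0 -> fin_index (@matmul n) Gamma0 Gamma ->
     forall V : 'cV[rat]_n -> Prop, is_subspace V ->
       (forall g v, Gamma0 g -> V v -> V (g *m v)) -> (exists v, V v /\ v <> 0) ->
       forall v, V v) ->
  forall f : 'cV[rat]_n -> 'cV[rat]_n,
    Comm (@compf _) (@PermS _) (Aff Gamma) f <-> Aff (Comm (@matmul n) (@GLn n) Gamma) f.
Proof.
move=> HGa Hirr f; split; last first.
  by case=> g [v [Hc ->]]; apply/(Comm_Aff_aff HGa v (proj1 Hc)).
move=> Hcomm; have [f' fK f'K] := proj1 Hcomm.
have /choice [GC GCE] : forall u, exists gc : 'M[rat]_n * 'cV[rat]_n,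
    forall w, f (u + w) = gc.2 + gc.1 *m f w.
  by move=> u; have [g [c e]] := Aff_conj_transl HGa fK f'K Hcomm u; exists (g, c).
have [M Munit fE] := f_affine fK f'K GCE (Aff_transl_intertwined HGa fK f'K Hcomm)
  (@Aff_lin_intertwined _ _ HGa f)
  (Hirr _ (Aff_Gamma0_subgroup HGa fK f'K) (Aff_Gamma0_fin_index HGa fK f'K Hcomm)).
exists M, (f 0); split; last by rewrite {1}fE.
by apply/(Comm_Aff_aff HGa (f 0) Munit); rewrite -fE.
Qed.

Theorem lemma7p1 :
  (forall (n : nat) (Gamma : 'M[rat]_n -> Prop),
     is_subgroup (@matmul n) 1%:M (@GLn n) Gamma ->
     (forall Gamma0 : 'M[rat]_n -> Prop,
        is_subgroup (@matmul n) 1%:M Gamma Gamma0 ->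
        fin_index (@matmul n) Gamma0 Gamma ->
        forall V : 'cV[rat]_n -> Prop, is_subspace V ->
          (forall g v, Gamma0 g -> V v -> V (g *m v)) ->
          (exists v, V v /\ v <> 0) ->
          forall v, V v) ->
     forall f : 'cV[rat]_n -> 'cV[rat]_n,
       Comm (@compf _) (@PermS _) (Aff Gamma) f <->
       Aff (Comm (@matmul n) (@GLn n) Gamma) f)
  /\
  (forall (L : Type) (mul : L -> L -> L) (one : L) (inv : L -> L)
          (L0 : L -> Prop),
     is_group mul one inv ->
     no_direct_product mul one inv ->
     no_fin_index_sub mul one ->
     is_subgroup mul one (fun _ => True) L0 ->
     (exists g, ~ L0 g) ->
     relative_ICC mul one inv L0 ->
     forall f : L -> L,
       Comm (@compf _) (@PermS _) (LRaction mul inv L0) f <->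
       exists (alpha : L -> L) (g0 : L),
         Comm (@compf _) (AutL mul) (AdS mul inv L0) alpha /\
         f = (fun g => mul (alpha g) g0)).
Proof. by split; [exact: Comm_Aff | exact: Comm_LRaction]. Qed.
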